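(* Let $n\ge 2$ and $k\in\{0,1,\dots,n-1\}$. The diagonalizable matrices (those similar to a diagonal matrix) contained in $(\mathbb{C}^{n\times n})_k$ form a Zariski dense subset of $(\mathbb{C}^{n\times n})_k$.
   Context: $(\mathbb{C}^{n\times n})_k=\{A\in\mathbb{C}^{n\times n}\mid \deg(m_A)\le n-k\}$, where $m_A$ is the minimal polynomial of $A$. *)

From HB Require Import structures.
From mathcomp Require Import all_boot all_order all_algebra.
From mathcomp Require Import mpoly.
From mathcomp Require Import reals.
From mathcomp Require Import complex.
Set Implicit Arguments. Unset Strict Implicit. Unset Printing Implicit Defensive.
Import GRing.Theory Num.Theory.
Local Open Scope ring_scope.

(* The field of complex numbers: R[i] for a real field R : realType
   (any realType is isomorphic to the reals, so R[i] is (isomorphic to) C). *)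

Definition mx_eval (F : comNzRingType) (m : nat) (p : {mpoly F[m * m]})
  (A : 'M[F]_m) : F := p.@[fun i => mxvec A 0 i].

Definition zariski_closure (F : comNzRingType) (m : nat) (S : 'M[F]_m -> Prop) :
  'M[F]_m -> Prop :=
  fun A => forall p : {mpoly F[m * m]},
    (forall B, S B -> mx_eval p B = 0) -> mx_eval p A = 0.

Definition zariski_dense_in (F : comNzRingType) (m : nat)
  (S T : 'M[F]_m -> Prop) : Prop :=
  (forall A, S A -> T A) /\ (forall A, T A -> zariski_closure S A).

(* (F^{m x m})_k = { A | deg (m_A) <= m - k }, for m = n.+1 >= 1
   (mxminpoly needs a dimension of the form n.+1). *)
Definition mx_layer (F : fieldType) (n k : nat) : 'M[F]_n.+1 -> Prop :=
  fun A => ((size (mxminpoly A)).-1 <= n.+1 - k)%N.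

From HB Require Import structures.
From mathcomp Require Import all_boot all_order all_algebra.
From mathcomp Require Import mpoly.
From mathcomp Require Import reals.
From mathcomp Require Import complex.
From mathcomp Require Import ring.
Set Implicit Arguments. Unset Strict Implicit. Unset Printing Implicit Defensive.
Import GRing.Theory Num.Theory.
Local Open Scope ring_scope.

(* Let A be in the layer, with minimal polynomial (X - mu_0)...(X - mu_(d-1))
   over an algebraically closed field of characteristic 0.  The (row) kernels
   of the partial products (A - mu_0)...(A - mu_(j-1)) form a flag, and a
   matrix D acting on the j-th step of the flag as multiplication by j modulo
   the previous step makes A + tD a root of the product of the
   X - (mu_j + t j).  For all but finitely many t these roots are distinct,
   so A + tD is diagonalizable and still in the layer.  A polynomial vanishing
   on the diagonalizable part of the layer therefore vanishes at A + tD for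
   all but finitely many t; being polynomial in t, it vanishes at t = 0. *)

Lemma horner_mx_XsubC (F : comNzRingType) n (B : 'M[F]_n.+1) c :
  horner_mx B ('X - c%:P) = B - c%:M.
Proof. by rewrite rmorphB /= horner_mx_X horner_mx_C. Qed.

Definition shift_roots (R : nzRingType) (s : seq R) (t : R) : seq R :=
  mkseq (fun j => s`_j + t * j%:R) (size s).

Section ShiftRoots.
Variables (F : fieldType) (n : nat) (A : 'M[F]_n.+1) (s : seq F).
Hypothesis A_split : horner_mx A (\prod_(z <- s) ('X - z%:P)) = 0.

Let d := size s.
Let mu i := s`_i.
Let flag j := kermx (horner_mx A (\prod_(i < j) ('X - (mu i)%:P))).
Let flag_proj j := pinvmx (flag j) *m flag j.

Definition shift_mx : 'M[F]_n.+1 := \sum_(i < d) (1%:M - flag_proj i.+1).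

Lemma flag_top : (1%:M <= flag d)%MS.
Proof.
have := A_split; rewrite (big_nth 0) big_mkord => A_split'.
by rewrite sub_kermx mul1mx A_split'.
Qed.

Lemma flag_mono i j : (i <= j)%N -> (flag i <= flag j)%MS.
Proof.
elim: j => [|j IHj]; first by rewrite leqn0 => /eqP ->.
rewrite leq_eqVlt => /orP[/eqP -> // | /IHj le_ij].
apply: submx_trans le_ij _; rewrite sub_kermx /flag big_ord_recr /= rmorphM /=.
by rewrite mulmxA mulmx_ker mul0mx.
Qed.

Lemma flag_shift m (u : 'M_(m, n.+1)) j :
  (u <= flag j.+1)%MS -> (u *m (A - (mu j)%:M) <= flag j)%MS.
Proof.
rewrite !sub_kermx big_ord_recr /= mulrC rmorphM /= horner_mx_XsubC.
by rewrite mulmxA.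
Qed.

Lemma shift_mx_flag m (u : 'M_(m, n.+1)) j : (j < d)%N -> (u <= flag j.+1)%MS ->
  (u *m shift_mx - j%:R *: u <= flag j)%MS.
Proof.
move=> lt_jd le_u.
have -> : j%:R *: u = \sum_(i < d | (i < j)%N) u.
  by rewrite -(big_ord_widen _ (fun=> u) (ltnW lt_jd)) sumr_const card_ord scaler_nat.
rewrite /shift_mx mulmx_sumr (bigID (fun i : 'I_d => (i < j)%N)) /= addrAC -sumrB.
apply: addmx_sub; apply: summx_sub => i lt_ij.
  rewrite mulmxBr mulmx1 addrAC subrr add0r (eqmx_opp _) /flag_proj mulmxA.
  exact: submx_trans (submxMl _ _) (flag_mono lt_ij).
rewrite mulmxBr mulmx1 /flag_proj mulmxA mulmxKpV ?subrr ?sub0mx //.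
by apply: submx_trans le_u (flag_mono _); rewrite ltnS leqNgt.
Qed.

Lemma shift_flag t m (u : 'M_(m, n.+1)) j : (j < d)%N -> (u <= flag j.+1)%MS ->
  (u *m (A + t *: shift_mx - (mu j + t * j%:R)%:M) <= flag j)%MS.
Proof.
move=> lt_jd le_u.
have -> : A + t *: shift_mx - (mu j + t * j%:R)%:M =
    (A - (mu j)%:M) + t *: (shift_mx - (j%:R)%:M).
  rewrite raddfD /= -scale_scalar_mx scalerBr opprD !addrA.
  by congr (_ + _); rewrite addrAC.
rewrite mulmxDr; apply: addmx_sub; first exact: flag_shift.
rewrite -scalemxAr; apply: scalemx_sub.
by rewrite mulmxBr mul_mx_scalar; apply: shift_mx_flag.
Qed.

Lemma flag_annihilated t j (u : 'M_n.+1) : (j <= d)%N -> (u <= flag j)%MS ->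
  u *m horner_mx (A + t *: shift_mx) (\prod_(i < j) ('X - (mu i + t * i%:R)%:P)) = 0.
Proof.
elim: j u => [|j IHj] u le_jd le_u.
  by move: le_u; rewrite /flag !big_ord0 !rmorph1 sub_kermx => /eqP.
rewrite big_ord_recr /= mulrC rmorphM /= horner_mx_XsubC mulmxA.
by apply: IHj; [exact: ltnW | exact: shift_flag].
Qed.

Lemma shift_roots_annihilate t :
  horner_mx (A + t *: shift_mx) (\prod_(z <- shift_roots s t) ('X - z%:P)) = 0.
Proof.
have -> : \prod_(z <- shift_roots s t) ('X - z%:P) =
    \prod_(i < d) ('X - (mu i + t * i%:R)%:P).
  rewrite big_map; have -> : iota 0 (size s) = index_iota 0 d.
    by rewrite /index_iota subn0.
  exact: big_mkord.
by rewrite -[LHS]mul1mx; apply: flag_annihilated flag_top.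
Qed.

End ShiftRoots.

Lemma size_mxminpoly_split (F : fieldType) n (B : 'M[F]_n.+1) (rs : seq F) :
  horner_mx B (\prod_(x <- rs) ('X - x%:P)) = 0 ->
  ((size (mxminpoly B)).-1 <= size rs)%N.
Proof.
move/mxminpoly_min/(dvdp_leq (monic_neq0 (monic_prod_XsubC _ _ _))).
by rewrite size_prod_XsubC; case: (size _).
Qed.

Lemma diagonalizable_split_uniq (F : fieldType) n (B : 'M[F]_n.+1) (rs : seq F) :
  uniq rs -> horner_mx B (\prod_(x <- rs) ('X - x%:P)) = 0 -> diagonalizable B.
Proof. by move=> uniq_rs /mxminpoly_min dvd_rs; apply/diagonalizableP; exists rs. Qed.

Lemma mx_eval_line (F : comNzRingType) m (p : {mpoly F[m * m]}) (A D : 'M[F]_m) :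
  exists q : {poly F}, forall t, q.[t] = mx_eval p (A + t *: D).
Proof.
exists (\sum_(mm <- msupp p) p@_mm *:
   \prod_(i < m * m) ((mxvec A 0 i)%:P + mxvec D 0 i *: 'X) ^+ mm i).
move=> t; rewrite /mx_eval mevalE horner_sum; apply: eq_bigr => mm _.
rewrite hornerZ horner_prod; congr (_ * _); apply: eq_bigr => i _.
rewrite horner_exp hornerD hornerC hornerZ hornerX; congr (_ ^+ _).
by rewrite linearD linearZ /= !mxE mulrC.
Qed.

Lemma poly_eq0_off_roots (R : numDomainType) (q h : {poly R}) :
  h != 0 -> (forall t, h.[t] != 0 -> q.[t] = 0) -> q = 0.
Proof.
move=> h_neq0 q_off.
have /eqP : q * h = 0.
  apply: (@roots_geq_poly_eq0 _ _ [seq i%:R | i <- iota 0 (size (q * h))]).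
  - apply/allP => x _; rewrite /root hornerM.
    by have [->|/q_off ->] := eqVneq h.[x] 0; rewrite ?mulr0 ?mul0r.
  - by rewrite map_inj_uniq ?iota_uniq // => a b /eqP; rewrite eqr_nat => /eqP.
  - by rewrite size_map size_iota.
by rewrite mulf_eq0 (negbTE h_neq0) orbF => /eqP.
Qed.

Lemma shift_roots_uniq_off_roots (R : numDomainType) (s : seq R) :
  exists2 h : {poly R}, h != 0 & forall t, h.[t] != 0 -> uniq (shift_roots s t).
Proof.
pose d := size s.
exists (\prod_(i < d) \prod_(j < d | (i < j)%N)
          ((s`_j - s`_i)%:P + (j%:R - i%:R) *: 'X)).
  apply/prodf_neq0 => i _; apply/prodf_neq0 => j lt_ij.
  apply: contraTneq lt_ij => /(congr1 (coefp 1)).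
  rewrite /= coefD coefC coefZ coefX coef0 add0r mulr1 => /eqP.
  by rewrite subr_eq0 eqr_nat => /eqP ->; rewrite ltnn.
move=> t; rewrite horner_prod => /prodf_neq0 h_t.
have shift_neq a b : (a < b < d)%N -> s`_a + t * a%:R != s`_b + t * b%:R.
  case/andP=> lt_ab lt_bd; have lt_ad := ltn_trans lt_ab lt_bd.
  have := h_t (Ordinal lt_ad) isT; rewrite horner_prod.
  move/prodf_neq0/(_ (Ordinal lt_bd) lt_ab); rewrite /= hornerD hornerC hornerZ hornerX.
  apply: contra => /eqP eq_ab.
  have -> : s`_b - s`_a + (b%:R - a%:R) * t = s`_b + t * b%:R - (s`_a + t * a%:R).
    by ring.
  by rewrite eq_ab subrr.
rewrite /shift_roots; apply/mkseq_uniqP => a b; rewrite !inE => lt_ad lt_bd eq_ab.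
case: (ltngtP a b) => [lt_ab|lt_ba|//].
  by move: (shift_neq a b); rewrite lt_ab lt_bd eq_ab eqxx => /(_ isT).
by move: (shift_neq b a); rewrite lt_ba lt_ad eq_ab eqxx => /(_ isT).
Qed.

Lemma diagonalizable_dense_in_mx_layer (F : numClosedFieldType) (n k : nat) :
  zariski_dense_in (fun A : 'M[F]_n.+1 => mx_layer k A /\ diagonalizable A)
    (mx_layer k).
Proof.
split=> [A [] // | A A_layer p p_diag].
have [s minpoly_s] := closed_field_poly_normal (mxminpoly A).
rewrite (monicP (mxminpoly_monic A)) scale1r in minpoly_s.
have A_split : horner_mx A (\prod_(z <- s) ('X - z%:P)) = 0.
  by rewrite -minpoly_s mx_root_minpoly.
have size_s : (size s <= n.+1 - k)%N.
  by move: A_layer; rewrite /mx_layer minpoly_s size_prod_XsubC.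
have [q q_line] := mx_eval_line p A (shift_mx A s).
have [h h_neq0 h_uniq] := shift_roots_uniq_off_roots s.
suff q0 : q = 0 by rewrite -[A]addr0 -(scale0r (shift_mx A s)) -q_line q0 horner0.
apply: poly_eq0_off_roots h_neq0 _ => t /h_uniq uniq_t.
have split_t := shift_roots_annihilate A_split t.
rewrite q_line; apply: p_diag; split; last exact: diagonalizable_split_uniq split_t.
by apply: leq_trans (size_mxminpoly_split split_t) _; rewrite size_mkseq.
Qed.

Theorem proposition2p1 (R : realType) (n k : nat)
  (hn : (2 <= n.+1)%N) (hk : (k <= n)%N) :
  zariski_dense_in
    (fun A : 'M[R[i]]_n.+1 => mx_layer k A /\ diagonalizable A)
    (mx_layer k).
Proof. exact: diagonalizable_dense_in_mx_layer. Qed.
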